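(* Let $k\ge 1$ and $n>\binom{k}{2}$. If $F_1,\ldots,F_k$ are subgraphs (sets of edges) of the complete bipartite graph $K_{n,n}$ satisfying $|F_i|\ge in$ for all $i\le k$, then $(F_1,\ldots,F_k)$ has a rainbow matching, i.e. there exist pairwise disjoint edges $e_1,\ldots,e_k$ with $e_i\in F_i$ for each $i$.
   Context: A rainbow matching for $(F_1,\ldots,F_k)$ is a choice of pairwise disjoint edges $e_i\in F_i$, one from each $F_i$. *)

From mathcomp Require Import all_boot.
Set Implicit Arguments. Unset Strict Implicit. Unset Printing Implicit Defensive.

(* Edges of the complete bipartite graph K_{n,n}: pairs (a, b) with a in the
   left part 'I_n and b in the right part 'I_n. *)
Definition bedge (n : nat) := ('I_n * 'I_n)%type.

Definition disjoint_edges (n : nat) (e f : bedge n) : bool :=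
  (e.1 != f.1) && (e.2 != f.2).

Definition rainbow_matching (n k : nat) (F : 'I_k -> {set bedge n}) : Prop :=
  exists e : 'I_k -> bedge n,
    (forall i, e i \in F i) /\
    (forall i j, i != j -> disjoint_edges (e i) (e j)).

(* Induct on k, strengthening the statement: each F_i may fall short of its
   bound i n by a common slack s, provided C(k,2) + s < n. If some vertex, say the left vertex a, has degree > k in some
   F_j, take the least such j and remove F_j from the list and all edges at a
   from the other families: those before F_j lose at most k edges each, those
   after it lose at most n but move down one index, so induction applies with
   slack s + k. The matching obtained uses at most k right vertices, so one of
   the > k edges of F_j at a extends it. If all degrees are at most k, pick any
   edge e of F_1 and remove from F_2, ..., F_(k+1) the at most 2k <= n edges
   meeting e; the index shift pays for them and the slack stays s. *)
From mathcomp Require Import all_boot zify.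
Set Implicit Arguments.
Unset Strict Implicit.
Unset Printing Implicit Defensive.

Section RainbowMatching.
Variable n : nat.
Implicit Types (A : {set bedge n}) (F G : nat -> {set bedge n}).
Implicit Types (x y : bedge n) (a b : 'I_n) (e M : nat -> bedge n).

Definition row a : {set bedge n} := [set x | x.1 == a].
Definition col b : {set bedge n} := [set x | x.2 == b].

Lemma disjoint_edgesC x y : disjoint_edges x y = disjoint_edges y x.
Proof. by rewrite /disjoint_edges eq_sym [x.2 == _]eq_sym. Qed.

Lemma disjoint_edgesE x y : disjoint_edges x y = (y \notin row x.1 :|: col x.2).
Proof. by rewrite /disjoint_edges !inE negb_or eq_sym [y.2 == _]eq_sym. Qed.

Lemma row_snd_inj A a : {in A :&: row a &, injective snd}.
Proof.
by case=> a1 b1 [a2 b2]; rewrite !inE /= => /andP[_ /eqP->] /andP[_ /eqP->] ->.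
Qed.

Lemma card_row_le A a : #|A :&: row a| <= n.
Proof.
rewrite -(card_in_imset (@row_snd_inj A a)).
by apply: leq_trans (max_card _) _; rewrite card_ord.
Qed.

Lemma exists_row_edge_avoid A a (C : {set 'I_n}) :
  #|C| < #|A :&: row a| -> exists2 x, x \in A :&: row a & x.2 \notin C.
Proof.
move=> ltCA; have [/exists_inP//|/exists_inPn inC] :=
  boolP [exists x in A :&: row a, x.2 \notin C].
have : snd @: (A :&: row a) \subset C.
  by apply/subsetP => _ /imsetP[x xA ->]; apply/negPn/inC.
move/subset_leq_card; rewrite card_in_imset; last exact: row_snd_inj.
by rewrite leqNgt ltCA.
Qed.

(* Families are indexed by nat, only the first k members counting, so that
   removing the member j is the reindexing i |-> bump j i. *)
Definition rainbow_for k F e :=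
  (forall i, i < k -> e i \in F i) /\
  (forall i j, i < k -> j < k -> i != j -> disjoint_edges (e i) (e j)).

Lemma rainbow_for_sub k F G e :
  (forall i, i < k -> G i \subset F i) ->
  rainbow_for k G e -> rainbow_for k F e.
Proof.
move=> sGF [eG e_disj]; split=> // i ik.
exact: subsetP (sGF i ik) _ (eG i ik).
Qed.

Lemma unbump_lt j i k : j <= k -> i < k.+1 -> i != j -> unbump j i < k.
Proof. by rewrite /unbump; case: ltnP => /= ji jk ik ij; lia. Qed.

Lemma rainbow_for_insert k j F x M :
  j <= k -> x \in F j -> (forall i, i < k -> disjoint_edges x (M i)) ->
  rainbow_for k (fun i => F (bump j i)) M ->
  rainbow_for k.+1 F (fun i => if i == j then x else M (unbump j i)).
Proof.
move=> jk xF x_disj [MF M_disj]; split=> [i ik | i i' ik i'k ii'].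
  by case: eqP => [-> // | /eqP ij]; rewrite -{2}(unbumpK ij) MF ?unbump_lt.
case: eqP => [ij | /eqP ij]; case: eqP => [i'j | /eqP i'j].
- by rewrite ij i'j eqxx in ii'.
- exact/x_disj/unbump_lt.
- by rewrite disjoint_edgesC; apply/x_disj/unbump_lt.
apply: M_disj; rewrite ?unbump_lt //.
by apply: contra ii' => /eqP/(can_in_inj unbumpK)->.
Qed.

Definition tr_edge x : bedge n := (x.2, x.1).

Lemma tr_edgeK : involutive tr_edge. Proof. by case. Qed.

Definition tr_set A := tr_edge @: A.

Lemma mem_tr_set A x : (x \in tr_set A) = (tr_edge x \in A).
Proof. by rewrite -{1}[x]tr_edgeK mem_imset //; apply: inv_inj tr_edgeK. Qed.

Lemma card_tr_set A : #|tr_set A| = #|A|.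
Proof. exact/card_imset/inv_inj/tr_edgeK. Qed.

Lemma tr_setI_row A b : tr_set A :&: row b = tr_set (A :&: col b).
Proof. by apply/setP => x; rewrite !(inE, mem_tr_set). Qed.

Lemma rainbow_for_tr k F e :
  rainbow_for k (tr_set \o F) e -> rainbow_for k F (tr_edge \o e).
Proof.
move=> [eF e_disj]; split=> [i ik | i j ik jk ij].
  by rewrite -mem_tr_set eF.
by rewrite /disjoint_edges andbC; apply: e_disj.
Qed.

Definition slack_rainbow k : Prop := forall s F, 'C(k, 2) + s < n ->
  (forall i, i < k -> i.+1 * n <= #|F i| + s) -> exists e, rainbow_for k F e.

Section Step.
Variables (k s : nat) (F : nat -> {set bedge n}).
Hypothesis IH : slack_rainbow k.
Hypothesis slack_lt : 'C(k.+1, 2) + s < n.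
Hypothesis card_F : forall i, i < k.+1 -> i.+1 * n <= #|F i| + s.

Fact slack_ltS : 'C(k, 2) + k + s < n.
Proof. by move: slack_lt; rewrite binS bin1. Qed.

Lemma slack_rainbow_high_row a j0 :
  j0 <= k -> k < #|F j0 :&: row a| -> exists e, rainbow_for k.+1 F e.
Proof.
move=> j0k deg_j0; have : exists j, (j <= k) && (k < #|F j :&: row a|).
  by exists j0; rewrite j0k.
case/ex_minnP => j /andP[jk deg_j] min_j.
have deg_lt_j i : i < j -> #|F i :&: row a| <= k.
  move=> ij; rewrite leqNgt; apply/negP => deg_i.
  have := min_j i; rewrite deg_i (ltnW (leq_trans ij jk)) => /(_ isT).
  by rewrite leqNgt ij.
pose G i := F (bump j i) :\: row a.
have [M MG] : exists M, rainbow_for k G M.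
  apply: (@IH (s + k) G); first by have := slack_ltS; lia.
  move=> i ik; rewrite /G /bump; case: (leqP j i) => [_ | ij].
  - have := cardsID (row a) (F i.+1); have := card_row_le (F i.+1) a.
    have := @card_F i.+1 ik; rewrite add1n mulSn; lia.
  - have := cardsID (row a) (F i); have := deg_lt_j i ij.
    have := card_F (ltnW ik); rewrite add0n; lia.
have [x xFa x_new] :
    exists2 x, x \in F j :&: row a & x.2 \notin [set (M i).2 | i : 'I_k].
  apply: exists_row_edge_avoid; apply: leq_ltn_trans deg_j.
  by rewrite -[k in _ <= k]card_ord leq_imset_card.
exists (fun i => if i == j then x else M (unbump j i)).
apply: rainbow_for_insert => //; first by case/setIP: xFa.
- move=> i ik; rewrite disjoint_edgesE.
  case/setIP: xFa => _; rewrite inE => /eqP->.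
  have := MG.1 i ik; rewrite !inE => /andP[/negPf-> _] /=.
  by apply: contra x_new => /eqP<-; apply/imsetP; exists (Ordinal ik).
- by apply: rainbow_for_sub MG => i _; apply: subsetDl.
Qed.

Lemma slack_rainbow_low_degree :
  (forall i a, i < k.+1 -> #|F i :&: row a| <= k) ->
  (forall i b, i < k.+1 -> #|F i :&: col b| <= k) ->
  exists e, rainbow_for k.+1 F e.
Proof.
move=> deg_row deg_col.
have : 0 < #|F 0| by have := card_F (ltn0Sn k); lia.
case/card_gt0P => x0 x0F.
have two_k : k + k <= n.
  have : k <= 'C(k, 2) + 1 by case: (k) => // m; rewrite binS bin1; lia.
  by have := slack_ltS; lia.
pose G i := F (bump 0 i) :\: (row x0.1 :|: col x0.2).
have [M MG] : exists M, rainbow_for k G M.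
  apply: (@IH s G); first by have := slack_ltS; lia.
  move=> i ik; rewrite /G /bump leq0n add1n.
  have lost : #|F i.+1 :&: (row x0.1 :|: col x0.2)| <= k + k.
    rewrite setIUr; apply: leq_trans (leq_card_setU _ _) _.
    by rewrite leq_add ?deg_row ?deg_col.
  have := cardsID (row x0.1 :|: col x0.2) (F i.+1); have := @card_F i.+1 ik.
  by rewrite mulSn; lia.
exists (fun i => if i == 0 then x0 else M (unbump 0 i)).
apply: rainbow_for_insert => //.
- move=> i ik; rewrite disjoint_edgesE.
  by have := MG.1 i ik; rewrite inE => /andP[].
- by apply: rainbow_for_sub MG => i _; apply: subsetDl.
Qed.

End Step.

Lemma slack_rainbowP k : slack_rainbow k.
Proof.
elim: k => [|k IH] s F slack_lt card_F.
  have n_gt0 : 0 < n by lia.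
  by exists (fun=> (Ordinal n_gt0, Ordinal n_gt0)); split.
have [/existsP[a /existsP[j deg_j]] | low_row] :=
  boolP [exists a, exists j : 'I_k.+1, k < #|F j :&: row a|].
  exact: (slack_rainbow_high_row IH slack_lt card_F (ltnSE (ltn_ord j)) deg_j).
have [/existsP[b /existsP[j deg_j]] | low_col] :=
  boolP [exists b, exists j : 'I_k.+1, k < #|F j :&: col b|].
  have [e tr_e] : exists e, rainbow_for k.+1 (tr_set \o F) e.
    apply: (slack_rainbow_high_row IH slack_lt _ (ltnSE (ltn_ord j)) (a := b)).
      by move=> i ik; rewrite card_tr_set; apply: card_F.
    by rewrite /= tr_setI_row card_tr_set.
  by exists (tr_edge \o e); apply: rainbow_for_tr.
apply: slack_rainbow_low_degree IH slack_lt card_F _ _ => [i a | i b] ik;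
  rewrite leqNgt.
- by move/existsPn: low_row => /(_ a) /existsPn /(_ (Ordinal ik)).
- by move/existsPn: low_col => /(_ b) /existsPn /(_ (Ordinal ik)).
Qed.

End RainbowMatching.

Theorem theorem10p3 (k n : nat) (F : 'I_k -> {set bedge n}) :
  1 <= k -> 'C(k, 2) < n ->
  (forall i : 'I_k, i.+1 * n <= #|F i|) ->
  rainbow_matching F.
Proof.
case: k F => [|k] F // _ bin_lt card_F.
have [e [eF e_disj]] : exists e, rainbow_for k.+1 (fun i => F (inord i)) e.
  apply: (@slack_rainbowP n k.+1 0); first by rewrite addn0.
  by move=> i ik; rewrite addn0; have := card_F (inord i); rewrite inordK.
exists (fun i => e i); split=> [i | i j ij]; last exact: e_disj.
by have := eF i (ltn_ord i); rewrite inord_val.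
Qed.
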